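(* There exists an open interval $I_2\subset\mathbb{R}$ containing $0$ such that the following hold. (1) There exist functions $\eta_2:I_2\to\mathbb{R}^3$ with $|\eta_2(t)|\ge1$ for all $t\in I_2$, and, for each $t\in I_2$, $T_t:I_2\to\mathbb{R}$, such that for all $x,t\in I_2$, $$(T_t(x))^2=(x+x^3,\,x^2,\,1)\cdot\eta_2(t).$$ (2) For each $x\in I_2$, the function $F_x:I_2\to\mathbb{R}$, $F_x(t):=(T_t(x))^2$, satisfies: (a) $F_x(x)=0$; (b) for $t\in I_2$, $\frac{\partial F_x}{\partial t}(t)=0$ if and only if $t=x$; (c) $\frac{\partial^2F_0}{\partial t^2}(0)=2$, and there is $\epsilon>0$ such that $\epsilon\le\frac{\partial^2F_x}{\partial t^2}(t)\le\epsilon^{-1}$ for all $x,t\in I_2$. *)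

From Stdlib Require Import Reals.
From Coquelicot Require Import Coquelicot.
Open Scope R_scope.

Definition dot3 (u v : R * R * R) : R :=
  let '(u1, u2, u3) := u in let '(v1, v2, v3) := v in u1 * v1 + u2 * v2 + u3 * v3.

Definition norm3 (u : R * R * R) : R := sqrt (dot3 u u).

(* Write phi x = x + x^3 and kappa t = 2t / (1 + 3t^2).  Then
   T_t(x)^2 = F x t = x^2 - phi x * kappa t + t^2 (1 - t^2) / (1 + 3t^2),
   and the last summand is a primitive of phi * kappa', so
   d/dt F x t = kappa' t * (phi t - phi x).  Near 0, kappa' > 0 and phi is
   strictly increasing, hence this derivative vanishes exactly at t = x, and
   the second derivative stays close to kappa'(0) phi'(0) = 2.  The square
   root T exists because F x t = (x - t)^2 (1 - t^2 - 2tx) / (1 + 3t^2). *)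

From Stdlib Require Import Reals Lra Psatz.
From Coquelicot Require Import Coquelicot.
Open Scope R_scope.

Lemma norm3_ge_abs_mid (u v w : R) : Rabs v <= norm3 (u, v, w).
Proof.
  rewrite <- sqrt_Rsqr_abs; unfold norm3, dot3, Rsqr.
  apply sqrt_le_1_alt; nra.
Qed.

Lemma Derive_ext_interval (f h : R -> R) (a b t : R) :
  (forall s, a < s < b -> f s = h s) -> a < t < b ->
  Derive f t = Derive h t.
Proof.
  intros Efh Ht; apply Derive_ext_loc.
  apply (locally_interval _ t a b); simpl; [lra | lra |].
  intros s Has Hsb; apply Efh; simpl in *; lra.
Qed.

Lemma ex_derive_ext_interval (f h : R -> R) (a b t : R) :
  (forall s, a < s < b -> f s = h s) -> a < t < b ->
  ex_derive h t -> ex_derive f t.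
Proof.
  intros Efh Ht; apply ex_derive_ext_loc.
  apply (locally_interval _ t a b); simpl; [lra | lra |].
  intros s Has Hsb; symmetry; apply Efh; simpl in *; lra.
Qed.

Lemma Derive2_ext_interval (f h : R -> R) (a b t : R) :
  (forall s, a < s < b -> f s = h s) -> a < t < b ->
  Derive_n f 2 t = Derive_n h 2 t.
Proof.
  intros Efh Ht; apply (Derive_ext_interval _ _ a b); [| exact Ht].
  intros s Hs; exact (Derive_ext_interval _ _ a b s Efh Hs).
Qed.

Definition phi (x : R) : R := x + x ^ 3.

Definition kappa (t : R) : R := 2 * t / (1 + 3 * t ^ 2).

Definition dkappa (t : R) : R := 2 * (1 - 3 * t ^ 2) / (1 + 3 * t ^ 2) ^ 2.

Definition d2kappa (t : R) : R := 36 * t * (t ^ 2 - 1) / (1 + 3 * t ^ 2) ^ 3.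

Definition eta2 (t : R) : R * R * R :=
  (- kappa t, 1, t ^ 2 * (1 - t ^ 2) / (1 + 3 * t ^ 2)).

Definition F (x t : R) : R := dot3 (phi x, x ^ 2, 1) (eta2 t).

Definition dF (x t : R) : R := dkappa t * (phi t - phi x).

Definition d2F (x t : R) : R :=
  d2kappa t * (phi t - phi x) + dkappa t * (1 + 3 * t ^ 2).

Definition T (t x : R) : R :=
  (x - t) * sqrt ((1 - t ^ 2 - 2 * t * x) / (1 + 3 * t ^ 2)).

Definition in_I2 (t : R) : Prop := -1/10 < t < 1/10.

Lemma denom_pos (t : R) : 0 < 1 + 3 * t ^ 2.
Proof. nra. Qed.

Lemma is_derive_F (x t : R) : is_derive (F x) t (dF x t).
Proof.
  unfold F, eta2, dot3, dF, kappa, dkappa, phi; pose proof (denom_pos t).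
  auto_derive; [lra | field; lra].
Qed.

Lemma is_derive_dF (x t : R) : is_derive (dF x) t (d2F x t).
Proof.
  unfold dF, d2F, dkappa, d2kappa, phi; pose proof (denom_pos t).
  auto_derive; [nra | field; lra].
Qed.

Lemma T_sq (x t : R) : in_I2 x -> in_I2 t -> T t x ^ 2 = F x t.
Proof.
  unfold in_I2; intros Hx Ht; pose proof (denom_pos t).
  unfold T, F, eta2, dot3, kappa, phi.
  rewrite Rpow_mult_distr, pow2_sqrt.
  - field; lra.
  - apply Rdiv_le_0_compat; nra.
Qed.

Lemma Derive_T_sq (x t : R) : in_I2 x -> in_I2 t ->
  Derive (fun s => T s x ^ 2) t = dF x t.
Proof.
  intros Hx Ht; rewrite (Derive_ext_interval _ (F x) (-1/10) (1/10)).
  - apply is_derive_unique, is_derive_F.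
  - intros s Hs; exact (T_sq x s Hx Hs).
  - exact Ht.
Qed.

Lemma Derive2_T_sq (x t : R) : in_I2 x -> in_I2 t ->
  Derive_n (fun s => T s x ^ 2) 2 t = d2F x t.
Proof.
  intros Hx Ht; rewrite (Derive2_ext_interval _ (F x) (-1/10) (1/10)).
  - change (Derive (Derive (F x)) t = d2F x t).
    rewrite (Derive_ext (Derive (F x)) (dF x)).
    + apply is_derive_unique, is_derive_dF.
    + intro s; apply is_derive_unique, is_derive_F.
  - intros s Hs; exact (T_sq x s Hx Hs).
  - exact Ht.
Qed.

Lemma ex_derive2_T_sq (x t : R) : in_I2 x -> in_I2 t ->
  ex_derive (fun s => T s x ^ 2) t /\
  ex_derive (Derive (fun s => T s x ^ 2)) t.
Proof.
  intros Hx Ht; split.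
  - apply (ex_derive_ext_interval _ (F x) (-1/10) (1/10)); [| exact Ht |].
    + intros s Hs; exact (T_sq x s Hx Hs).
    + eexists; apply is_derive_F.
  - apply (ex_derive_ext_interval _ (dF x) (-1/10) (1/10)); [| exact Ht |].
    + intros s Hs; exact (Derive_T_sq x s Hx Hs).
    + eexists; apply is_derive_dF.
Qed.

Lemma dkappa_pos (t : R) : in_I2 t -> 0 < dkappa t.
Proof.
  unfold in_I2, dkappa; intros Ht; pose proof (denom_pos t).
  apply Rdiv_lt_0_compat; nra.
Qed.

Lemma phi_sub_eq0 (t x : R) : phi t - phi x = 0 <-> t = x.
Proof.
  split; [| intros ->; ring].
  intros E.
  assert (Hf : (t - x) * (1 + t ^ 2 + t * x + x ^ 2) = 0)
    by (rewrite <- E; unfold phi; ring).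
  destruct (Rmult_integral _ _ Hf) as [Htx | Hq]; [lra |].
  nra.
Qed.

Lemma dF_eq0 (x t : R) : in_I2 t -> dF x t = 0 <-> t = x.
Proof.
  intros Ht; rewrite <- (phi_sub_eq0 t x); unfold dF.
  pose proof (dkappa_pos t Ht).
  split; [| intros E; rewrite E; ring].
  intros E; destruct (Rmult_integral _ _ E); lra.
Qed.

Lemma d2F_bounds (x t : R) : in_I2 x -> in_I2 t -> 1/3 <= d2F x t <= 3.
Proof.
  unfold in_I2; intros Hx Ht.
  assert (Hphi : -21/100 < phi t - phi x < 21/100) by (unfold phi; nra).
  assert (Ht2 : 0 <= t ^ 2 < 1/100) by nra.
  assert (Hd2k : -4 <= d2kappa t <= 4).
  { unfold d2kappa; set (D := 1 + 3 * t ^ 2) in *.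
    assert (1 <= D ^ 3) by (unfold D; nra).
    split; [apply Rle_div_r | apply Rle_div_l]; nra. }
  assert (Hdk : 188/100 <= dkappa t * (1 + 3 * t ^ 2) <= 2).
  { unfold dkappa; replace (2 * (1 - 3 * t ^ 2) / (1 + 3 * t ^ 2) ^ 2
      * (1 + 3 * t ^ 2)) with (2 * (1 - 3 * t ^ 2) / (1 + 3 * t ^ 2))
      by (field; lra).
    split; [apply (Rle_div_r _ _ (1 + 3 * t ^ 2)) | apply Rle_div_l]; nra. }
  unfold d2F; nra.
Qed.

Theorem mainTheorem8 :
  exists a b : R, a < 0 < b /\
  exists (eta2 : R -> R * R * R) (T : R -> R -> R),
    (* (1) *)
    (forall t, a < t < b -> 1 <= norm3 (eta2 t)) /\
    (forall x t, a < x < b -> a < t < b ->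
       (T t x) ^ 2 = dot3 (x + x ^ 3, x ^ 2, 1) (eta2 t)) /\
    (* (2): F_x(t) := (T_t(x))^2, twice differentiable on I_2 *)
    (forall x, a < x < b ->
       (fun t => (T t x) ^ 2) x = 0 /\
       (forall t, a < t < b ->
          ex_derive (fun s => (T s x) ^ 2) t /\
          ex_derive (Derive (fun s => (T s x) ^ 2)) t) /\
       (forall t, a < t < b ->
          (Derive (fun s => (T s x) ^ 2) t = 0 <-> t = x))) /\
    Derive_n (fun s => (T s 0) ^ 2) 2 0 = 2 /\
    exists eps : R, 0 < eps /\
      forall x t, a < x < b -> a < t < b ->
        eps <= Derive_n (fun s => (T s x) ^ 2) 2 t <= / eps.
Proof.
  exists (-1/10), (1/10); split; [lra |].
  exists eta2, T; split; [| split; [| split; [| split]]].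
  - intros t _; rewrite <- Rabs_R1; apply norm3_ge_abs_mid.
  - intros x t Hx Ht; exact (T_sq x t Hx Ht).
  - intros x Hx; split; [| split].
    + unfold T; simpl; ring.
    + intros t Ht; exact (ex_derive2_T_sq x t Hx Ht).
    + intros t Ht; rewrite (Derive_T_sq x t Hx Ht); exact (dF_eq0 x t Ht).
  - rewrite Derive2_T_sq; [| unfold in_I2; lra ..].
    unfold d2F, d2kappa, dkappa, phi; field.
  - exists (1/3); split; [lra |]; intros x t Hx Ht.
    rewrite (Derive2_T_sq x t Hx Ht), Rinv_div, Rdiv_1_r; exact (d2F_bounds x t Hx Ht).
Qed.
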